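(* EDHNN is a special case of the MultiSet framework: there is a choice of the MultiSet functions $f_{\mathcal{V}\to\mathcal{E}}, f_{\mathcal{E}\to\mathcal{V}}, f_{\mathcal{V}\to\mathcal{V}}$ such that the MultiSet scheme reproduces the hyperedge representations and the final node representations computed by EDHNN.
   Context: A hypergraph is $\mathcal{G}=(\mathcal{V},\mathcal{E})$ with each hyperedge $e\in\mathcal{E}$ a subset of $\mathcal{V}$; $\mathcal{E}_v=\{e\in\mathcal{E}:v\in e\}$ and $d_v=|\mathcal{E}_v|$. A function is called a multiset function if it is permutation invariant with respect to each of its (set-valued) arguments in turn. MultiSet framework: each hyperedge $e$ has a representation $\bm z_e^{(t)}\in\mathbb{R}^d$ at step $t$; each node $v$ has one representation $\bm x_{v,e}^{(t)}\in\mathbb{R}^f$ for each hyperedge $e\in\mathcal{E}_v$, and $\mathbb{X}_v^{(t)}=\{\bm x_{v,e}^{(t)}\}_{e\in\mathcal{E}_v}$. The updates are $$\bm z_e^{(t+1)}=f_{\mathcal{V}\to\mathcal{E}}\big(\{\mathbb{X}_u^{(t)}\}_{u\in e};\ \bm z_e^{(t)}\big),\qquad \bm x_{v,e}^{(t+1)}=f_{\mathcal{E}\to\mathcal{V}}\big(\{\bm z_{e}^{(t+1)}\}_{e\in\mathcal{E}_v};\ \{\mathbb{X}_v^{(k)}\}_{k=0}^{t}\big),$$ and after $T$ steps a readout $\bm x_v^{(T)}=f_{\mathcal{V}\to\mathcal{V}}\big(\{\mathbb{X}_v^{(k)}\}_{k=0}^{T}\big)$, where $f_{\mathcal{V}\to\mathcal{E}},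 f_{\mathcal{E}\to\mathcal{V}}$ are multiset functions with respect to their first input and $f_{\mathcal{V}\to\mathcal{V}}$ is a multiset function. EDHNN is the propagation scheme with a single representation $\bm x_v^{(t)}$ per node and updates $$\bm z_e^{(t+1)}=\sum_{u\in e}\hat\phi(\bm x_u^{(t)}),\qquad \bm x_v^{(t+1)}=\hat\psi\Big(\bm x_v^{(t)},\ \sum_{e\in\mathcal{E}_v}\hat\rho\big(\bm x_v^{(t)},\bm z_e^{(t+1)}\big),\ \bm x_v^{(0)},\ d_v\Big),$$ where $\hat\phi,\hat\psi,\hat\rho$ are MLPs shared across layers, and its output after $T$ steps is $\bm x_v^{(T)}$. *)

From HB Require Import structures.
From mathcomp Require Import all_boot all_order all_algebra.
Set Implicit Arguments. Unset Strict Implicit. Unset Printing Implicit Defensive.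
Import GRing.Theory.
Local Open Scope ring_scope.

(* A hypergraph is given by finite types V (nodes) and E (hyperedge labels)
   together with an incidence predicate inc : V -> E -> bool, where
   inc v e means v \in e.  Then E_v = [pred e | inc v e], d_v = #|E_v|. *)

Section EDHNN.
Variables (R : ringType) (V E : finType) (inc : V -> E -> bool) (f d h : nat).
Variable phi : 'rV[R]_f -> 'rV[R]_d.
Variable rho : 'rV[R]_f -> 'rV[R]_d -> 'rV[R]_h.
Variable psi : 'rV[R]_f -> 'rV[R]_h -> 'rV[R]_f -> nat -> 'rV[R]_f.
Variable x0 : V -> 'rV[R]_f.

Definition edhnn_zfrom (xt : V -> 'rV[R]_f) (e : E) : 'rV[R]_d :=
  \sum_(u | inc u e) phi (xt u).

Fixpoint edhnn_x (t : nat) : V -> 'rV[R]_f :=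
  match t with
  | 0 => x0
  | t'.+1 =>
      let xt := edhnn_x t' in
      fun v => psi (xt v)
                   (\sum_(e | inc v e) rho (xt v) (edhnn_zfrom xt e))
                   (x0 v) #|[pred e | inc v e]|
  end.

(* edhnn_z t e = z_e^(t+1) *)
Definition edhnn_z (t : nat) (e : E) : 'rV[R]_d := edhnn_zfrom (edhnn_x t) e.
End EDHNN.

(* Multisets are represented by finite sequences; a "multiset function" is a
   function on sequences that is invariant under permutations. *)

(* s and s' are equal as multisets of multisets: after permuting the outer
   sequence, corresponding inner sequences are permutations of each other. *)
Definition perm_nested (T : eqType) (s s' : seq (seq T)) : Prop :=
  exists2 t, perm_eq t s' & all2 (fun a b => perm_eq a b) s t.

Section MultiSetDefs.
Variables (R : ringType) (f d : nat).

(* f_{V->E}( {X_u}_{u in e} ; z_e ) : multiset function in its first input,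
   whose elements X_u are themselves multisets *)
Definition mset_fun_VE (fVE : seq (seq 'rV[R]_f) -> 'rV[R]_d -> 'rV[R]_d) : Prop :=
  forall s s' z, perm_nested s s' -> fVE s z = fVE s' z.

(* f_{E->V}( {z_e}_{e in E_v} ; {X_v^(k)}_{k=0..t} ) : multiset function in
   its first input (we additionally require invariance under permutation
   inside each X_v^(k)) *)
Definition mset_fun_EV (fEV : seq 'rV[R]_d -> seq (seq 'rV[R]_f) -> 'rV[R]_f) : Prop :=
  (forall zs zs' H, perm_eq zs zs' -> fEV zs H = fEV zs' H) /\
  (forall zs H H', all2 (fun a b => perm_eq a b) H H' -> fEV zs H = fEV zs H').

Definition mset_fun_VV (fVV : seq (seq 'rV[R]_f) -> 'rV[R]_f) : Prop :=
  forall H H', all2 (fun a b => perm_eq a b) H H' -> fVV H = fVV H'.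
End MultiSetDefs.

Section MultiSet.
Variables (R : ringType) (V E : finType) (inc : V -> E -> bool) (f d : nat).
Variable fVE : seq (seq 'rV[R]_f) -> 'rV[R]_d -> 'rV[R]_d.
Variable fEV : seq 'rV[R]_d -> seq (seq 'rV[R]_f) -> 'rV[R]_f.
Variable X0 : V -> E -> 'rV[R]_f.   (* x_{v,e}^(0) (used for inc v e) *)
Variable z0 : E -> 'rV[R]_d.

Definition mset (X : V -> E -> 'rV[R]_f) (v : V) : seq 'rV[R]_f :=
  [seq X v e | e <- enum E & inc v e].

Definition ms_zstep (X : V -> E -> 'rV[R]_f) (z : E -> 'rV[R]_d) (e : E) : 'rV[R]_d :=
  fVE [seq mset X u | u <- enum V & inc u e] (z e).

Definition ms_xstep (hist : seq (V -> E -> 'rV[R]_f)) (z' : E -> 'rV[R]_d)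
    (v : V) (_ : E) : 'rV[R]_f :=
  fEV [seq z' e' | e' <- enum E & inc v e'] [seq mset Xk v | Xk <- hist].

(* ms_run t = ([:: X^(0); ...; X^(t)], z^(t)) *)
Fixpoint ms_run (t : nat) : seq (V -> E -> 'rV[R]_f) * (E -> 'rV[R]_d) :=
  match t with
  | 0 => ([:: X0], z0)
  | t'.+1 =>
      let: (hist, z) := ms_run t' in
      let z' := ms_zstep (last X0 hist) z in
      (rcons hist (ms_xstep hist z'), z')
  end.

Definition ms_hist (t : nat) := (ms_run t).1.
Definition ms_z (t : nat) := (ms_run t).2.

Definition ms_out (fVV : seq (seq 'rV[R]_f) -> 'rV[R]_f) (T : nat) (v : V) : 'rV[R]_f :=
  fVV [seq mset Xk v | Xk <- ms_hist T].
End MultiSet.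

(** Every node representation in the MultiSet simulation of EDHNN is a
   constant multiset: [X_v^(t)] consists of [d_v] copies of EDHNN's [x_v^(t)].
   Hence averaging each multiset recovers [x_v^(t)], and averaging is
   permutation invariant, so the EDHNN updates composed with averaging are
   multiset functions. The first element of the history [{X_v^(k)}_k] gives
   the residual input [x_v^(0)], its last element the current state, and the
   number of incident hyperedges [d_v] is the size of [{z_e}_(e in E_v)]. *)

From HB Require Import structures.
From mathcomp Require Import all_boot all_order all_algebra.
Set Implicit Arguments. Unset Strict Implicit. Unset Printing Implicit Defensive.
Import GRing.Theory Num.Theory.
Local Open Scope ring_scope.

Section Average.
Variables (R : numFieldType) (U : lmodType R).

Definition avg (s : seq U) : U := (size s)%:R^-1 *: \sum_(x <- s) x.

Lemma perm_avg s s' : perm_eq s s' -> avg s = avg s'.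
Proof. by move=> pss'; rewrite /avg (perm_size pss') (perm_big _ pss'). Qed.

Lemma avg_nseq k c : (0 < k)%N -> avg (nseq k c) = c.
Proof.
move=> k_gt0; rewrite /avg size_nseq big_nseq.
by rewrite iter_addr_0 -scaler_nat scalerA mulVf ?scale1r // pnatr_eq0 -lt0n.
Qed.

Lemma all2_perm_map_avg (H H' : seq (seq U)) :
  all2 (fun a b => perm_eq a b) H H' -> map avg H = map avg H'.
Proof.
elim: H H' => [|a H IH] [|b H'] //= /andP[pab /IH ->].
by rewrite (perm_avg pab).
Qed.

End Average.

Arguments avg {R U}.

Lemma size_filter_enum (T : finType) (P : pred T) :
  size [seq x <- enum T | P x] = #|[pred x | P x]|.
Proof. by rewrite enumT cardE /enum_mem size_filter; apply: eq_count. Qed.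

Section MultiSetRun.
Variables (R : ringType) (V E : finType) (inc : V -> E -> bool) (f d : nat).
Variables (fVE : seq (seq 'rV[R]_f) -> 'rV[R]_d -> 'rV[R]_d).
Variables (fEV : seq 'rV[R]_d -> seq (seq 'rV[R]_f) -> 'rV[R]_f).
Variables (X0 : V -> E -> 'rV[R]_f) (z0 : E -> 'rV[R]_d).

Local Notation hist := (ms_hist inc fVE fEV X0 z0).
Local Notation z := (ms_z inc fVE fEV X0 z0).

Lemma ms_zS t : z t.+1 = ms_zstep inc fVE (last X0 (hist t)) (z t).
Proof. by rewrite /ms_z /ms_hist /=; case: (ms_run _ _ _ _ _ t). Qed.

Lemma ms_histS t :
  hist t.+1 = rcons (hist t) (ms_xstep inc fEV (hist t) (z t.+1)).
Proof. by rewrite ms_zS /ms_z /ms_hist /=; case: (ms_run _ _ _ _ _ t). Qed.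

End MultiSetRun.

Section EDHNNAsMultiSet.
Variables (R : numFieldType) (f d h : nat).
Variable phi : 'rV[R]_f -> 'rV[R]_d.
Variable rho : 'rV[R]_f -> 'rV[R]_d -> 'rV[R]_h.
Variable psi : 'rV[R]_f -> 'rV[R]_h -> 'rV[R]_f -> nat -> 'rV[R]_f.

Definition edhnn_fVE (Xs : seq (seq 'rV[R]_f)) (_ : 'rV[R]_d) : 'rV[R]_d :=
  \sum_(X <- Xs) phi (avg X).

Definition edhnn_fEV (zs : seq 'rV[R]_d) (H : seq (seq 'rV[R]_f)) : 'rV[R]_f :=
  let xt := last 0 (map avg H) in
  psi xt (\sum_(z <- zs) rho xt z) (head 0 (map avg H)) (size zs).

Definition edhnn_fVV (H : seq (seq 'rV[R]_f)) : 'rV[R]_f := last 0 (map avg H).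

Lemma edhnn_fVE_mset : mset_fun_VE edhnn_fVE.
Proof.
move=> s s' z [t pts' st]; rewrite /edhnn_fVE -(perm_big _ pts').
by rewrite -!(big_map avg xpredT phi) (all2_perm_map_avg st).
Qed.

Lemma edhnn_fEV_mset : mset_fun_EV edhnn_fEV.
Proof.
split=> [zs zs' H pzs | zs H H' HH'].
  by rewrite /edhnn_fEV (perm_size pzs) (perm_big _ pzs).
by rewrite /edhnn_fEV (all2_perm_map_avg HH').
Qed.

Lemma edhnn_fVV_mset : mset_fun_VV edhnn_fVV.
Proof. by move=> H H' HH'; rewrite /edhnn_fVV (all2_perm_map_avg HH'). Qed.

Section Simulation.
Variables (V E : finType) (inc : V -> E -> bool).
Hypothesis inc_cover : forall v, exists e, inc v e.
Variables (x0 : V -> 'rV[R]_f) (z0 : E -> 'rV[R]_d).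

Local Notation X0 := (fun (v : V) (_ : E) => x0 v).
Local Notation x := (edhnn_x inc phi rho psi x0).
Local Notation hist := (ms_hist inc edhnn_fVE edhnn_fEV X0 z0).

Lemma avg_mset_const (X : V -> E -> 'rV[R]_f) v c :
  (forall e, X v e = c) -> avg (mset inc X v) = c.
Proof.
move=> Xv_c; have -> : mset inc X v = nseq (size (mset inc X v)) c.
  by apply/all_pred1P/allP => _ /mapP[e _ ->]; rewrite /= Xv_c.
apply: avg_nseq; have [e inc_ve] := inc_cover v.
by rewrite size_map size_filter -has_count; apply/hasP; exists e; rewrite ?mem_enum.
Qed.

Definition tracks_edhnn t (H : seq (V -> E -> 'rV[R]_f)) :=
  forall v, [seq avg (mset inc Xk v) | Xk <- H] = mkseq (x^~ v) t.+1.

Lemma last_tracks_edhnn t H v :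
  tracks_edhnn t H -> avg (mset inc (last X0 H) v) = x t v.
Proof.
move=> HH; have := congr1 (last (avg (mset inc X0 v))) (HH v).
by rewrite (last_map (fun Xk => avg (mset inc Xk v))) mkseqS last_rcons.
Qed.

Lemma ms_zstep_edhnn t H zt e : tracks_edhnn t H ->
  ms_zstep inc edhnn_fVE (last X0 H) zt e = edhnn_z inc phi rho psi x0 t e.
Proof.
move=> HH; rewrite /ms_zstep /edhnn_fVE big_map big_filter big_enum_cond.
by apply: eq_bigr => u _; rewrite (last_tracks_edhnn u HH).
Qed.

Lemma ms_hist_tracks_edhnn t : tracks_edhnn t (hist t).
Proof.
elim: t => [|t IH] v; first by rewrite /= (avg_mset_const (c := x0 v)).
rewrite ms_histS map_rcons IH [RHS]mkseqS; congr rcons.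
apply: avg_mset_const => e; rewrite /ms_xstep /edhnn_fEV -map_comp IH.
rewrite mkseqS last_rcons -mkseqS /= big_map big_filter big_enum_cond.
rewrite size_map size_filter_enum; congr psi; apply: eq_bigr => e' _.
by rewrite ms_zS (ms_zstep_edhnn _ _ IH).
Qed.

Lemma ms_z_edhnn t e :
  ms_z inc edhnn_fVE edhnn_fEV X0 z0 t.+1 e = edhnn_z inc phi rho psi x0 t e.
Proof. by rewrite ms_zS (ms_zstep_edhnn _ _ (ms_hist_tracks_edhnn t)). Qed.

Lemma ms_out_edhnn T v :
  ms_out inc edhnn_fVE edhnn_fEV X0 z0 edhnn_fVV T v = x T v.
Proof.
by rewrite /ms_out /edhnn_fVV -map_comp ms_hist_tracks_edhnn mkseqS last_rcons.
Qed.

End Simulation.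
End EDHNNAsMultiSet.

Theorem proposition3 (R : realFieldType) (f d h : nat)
    (phi : 'rV[R]_f -> 'rV[R]_d)
    (rho : 'rV[R]_f -> 'rV[R]_d -> 'rV[R]_h)
    (psi : 'rV[R]_f -> 'rV[R]_h -> 'rV[R]_f -> nat -> 'rV[R]_f) :
  exists (fVE : seq (seq 'rV[R]_f) -> 'rV[R]_d -> 'rV[R]_d)
         (fEV : seq 'rV[R]_d -> seq (seq 'rV[R]_f) -> 'rV[R]_f)
         (fVV : seq (seq 'rV[R]_f) -> 'rV[R]_f),
    [/\ mset_fun_VE fVE, mset_fun_EV fEV, mset_fun_VV fVV &
    forall (V E : finType) (inc : V -> E -> bool),
      (forall v : V, exists e : E, inc v e) ->
      forall (x0 : V -> 'rV[R]_f) (z0 : E -> 'rV[R]_d),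
        let X0 := fun (v : V) (_ : E) => x0 v in
        (forall (t : nat) (e : E),
            ms_z inc fVE fEV X0 z0 t.+1 e = edhnn_z inc phi rho psi x0 t e) /\
        (forall (T : nat) (v : V),
            ms_out inc fVE fEV X0 z0 fVV T v = edhnn_x inc phi rho psi x0 T v)].
Proof.
exists (edhnn_fVE phi), (edhnn_fEV rho psi), (@edhnn_fVV R f).
split; [exact: edhnn_fVE_mset | exact: edhnn_fEV_mset | exact: edhnn_fVV_mset |].
move=> V E inc inc_cover x0 z0 X0; split.
- exact: ms_z_edhnn.
- exact: ms_out_edhnn.
Qed.
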